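(* In the category $\mathbb{T}_\alpha$, the socle of $V^*$ is $V_*=V^*_{\aleph_0}$, and for every infinite cardinal $\beta\le\alpha$ the socle of $V^*/V^*_\beta$ is $V^*_{\beta^+}/V^*_\beta$, which is a simple module. Consequently the transfinite socle filtration of $V^*$ is the chain $0\subset V^*_{\aleph_0}\subset\cdots\subset V^*_\beta\subset\cdots\subset V^*_\alpha\subset V^*$ of subspaces $V^*_\beta$, $\beta$ ranging over infinite cardinals $\le\alpha^+$.
   Context: $\mathbb{K}$ is an algebraically closed field of characteristic $0$, $\alpha$ an infinite cardinal, $\beta^+$ the successor cardinal. $V,V_*$ are $\alpha$-dimensional with a nondegenerate pairing $\mathbf{p}:V_*\otimes V\to\mathbb{K}$ admitting dual bases indexed by $\Sigma$, $|\Sigma|=\alpha$. Elements of $V^*=\operatorname{Hom}(V,\mathbb{K})$ are $\Sigma$-indexed row vectors, $V_*$ the finitely supported ones; for an infinite cardinal $\beta\le\alpha^+$, $V^*_\beta$ is the subspace of row vectors with fewer than $\beta$ nonzero entries ($V^*_{\alpha^+}=V^*$). $\mathfrak{gl}^M=\{x\in\operatorname{End}(V_* ):x^*(V)\subseteq V\}$ (matrices with finitely many nonzero entries in each row and column) acts on $V$ by left multiplication and on $V^*$ by $g\cdot v=-vg$. $\mathbb{T}_\alpha$ is the smallest full monoidal subcategory of $\mathfrak{gl}^M$-mod containing $V$ and $V^*$ and closed under subquotients. The transfinite socle filtration of $X$ is defined by $\operatorname{soc}^1X=\operatorname{soc}X$, $\operatorname{soc}^{b+1}X$ the preimage in $X$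 of $\operatorname{soc}(X/\operatorname{soc}^bX)$, and at limit ordinals the union of the previous terms. *)

From HB Require Import structures.
From mathcomp Require Import all_boot all_algebra.
Set Implicit Arguments. Unset Strict Implicit. Unset Printing Implicit Defensive.
Import GRing.Theory.
Local Open Scope ring_scope.

Section Defs.
Variables (K : fieldType) (Sigma : eqType).

(* V^* = all Sigma-indexed row vectors; subspaces of V^* are predicates. *)
Definition rowvec := Sigma -> K.
Definition subsp := rowvec -> Prop.

Definition sub_le (P Q : subsp) : Prop := forall v, P v -> Q v.
Definition sub_eq (P Q : subsp) : Prop := forall v, P v <-> Q v.

Definition zero_sub : subsp := fun v => forall i, v i = 0.
Definition full_sub : subsp := fun _ => True.

Definition glM (g : Sigma -> Sigma -> K) : Prop :=
  (forall i, exists s : seq Sigma, forall j, g i j != 0 -> j \in s) /\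
  (forall j, exists s : seq Sigma, forall i, g i j != 0 -> i \in s).

(* w = g . v = - v g  (the sum over column j of g is finite) *)
Definition act (g : Sigma -> Sigma -> K) (v w : rowvec) : Prop :=
  forall j, exists s : seq Sigma, uniq s /\ (forall i, g i j != 0 -> i \in s) /\
    w j = - \sum_(i <- s) v i * g i j.

Definition subspace (P : subsp) : Prop :=
  P (fun _ => 0) /\ forall (a : K) u v, P u -> P v -> P (fun i => a * u i + v i).

Definition submod (P : subsp) : Prop :=
  subspace P /\ forall g v w, glM g -> P v -> act g v w -> P w.

(* P/U is a simple submodule of V^*/U  (P a submodule containing U) *)
Definition simple_over (U P : subsp) : Prop :=
  [/\ submod P, sub_le U P, ~ sub_le P U &
    forall Q, submod Q -> sub_le U Q -> sub_le Q P -> sub_le Q U \/ sub_le P Q].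

(* preimage in V^* of soc(V^*/U): U + (sum of all simple submodules of V^*/U) *)
Definition socle_over (U : subsp) : subsp := fun v =>
  exists (n : nat) (p : 'I_n -> rowvec),
    (forall k, exists P, simple_over U P /\ P (p k)) /\
    U (fun i => v i - \sum_(k < n) p k i).

Definition finsupp : subsp := fun v =>
  exists s : seq Sigma, forall i, v i != 0 -> i \in s.

(* V^*_beta for beta = |B| : fewer than |B| nonzero entries,
   i.e. B does not inject into the support of v *)
Definition Vlt (B : Type) : subsp := fun v =>
  ~ exists f : B -> Sigma, injective f /\ forall b, v (f b) != 0.

(* V^*_{beta^+} for beta = |B| : at most |B| nonzero entries *)
Definition Vle (B : Type) : subsp := fun v =>
  exists f : {i : Sigma | v i != 0} -> B, injective f.

(* The set of terms of the transfinite socle filtration of V^*: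
   the smallest family containing soc^0 = 0 (empty union), closed under
   soc^b |-> soc^{b+1} and under unions (limit stages). *)
Inductive SocLayer : subsp -> Prop :=
| SL_union (F : subsp -> Prop) :
    (forall W, F W -> SocLayer W) ->
    SocLayer (fun v => zero_sub v \/ exists W, F W /\ W v)
| SL_succ (W : subsp) : SocLayer W -> SocLayer (socle_over W).

End Defs.

Arguments zero_sub : clear implicits.
Arguments full_sub : clear implicits.
Arguments finsupp : clear implicits.
Arguments Vlt : clear implicits.
Arguments Vle : clear implicits.

From HB Require Import structures.
From mathcomp Require Import all_boot all_algebra.
From mathcomp Require Import boolp classical_sets.
From mathcomp Require Import zify.
From Stdlib Require Import Classical.
Set Implicit Arguments. Unset Strict Implicit. Unset Printing Implicit Defensive.

(* A matrix of gl^M sends v to a vector whose support is covered by finitely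
   many indices per index of supp v; since B x nat injects into B for infinite B,
   gl^M never increases the cardinality of an infinite support and keeps finite
   supports finite.  Conversely g.w can be any u whose support maps finite-to-one
   into supp w.  Hence V^*_{beta^+}/V^*_beta is simple, and any vector outside
   V^*_beta is cut down by a diagonal projection to one in V^*_{beta^+} \ V^*_beta,
   so the socle of V^*/V^*_beta is no bigger.  The socle layers are then classified
   by transfinite induction: a union of layers V^*_beta is V^*_gamma for the least
   cardinal gamma of a subset of Sigma dominating all the beta. *)

Definition card_le (A B : Type) := exists f : A -> B, injective f.

Lemma card_le_refl A : card_le A A. Proof. by exists id. Qed.

Lemma card_le_trans A B C : card_le A B -> card_le B C -> card_le A C.
Proof. by move=> [f fi] [g gi]; exists (g \o f); apply: inj_comp. Qed.

Lemma card_le_inhabited B : card_le nat B -> inhabited B.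
Proof. by case=> f _; constructor; exact: f 0%N. Qed.

Lemma sval_inj T (P : T -> Prop) : injective (@sval T P).
Proof. by case=> a pa [b pb] /= ab; apply: eq_exist. Qed.

Lemma card_le_sig T (P : T -> Prop) : card_le {x | P x} T.
Proof. by exists sval; apply: sval_inj. Qed.

Lemma maximal_pairwise T (R : T -> T -> Prop) : exists H : set T,
  (forall x y, H x -> H y -> R x y) /\
  forall x, R x x -> (forall y, H y -> R x y /\ R y x) -> H x.
Proof.
pose P : set (set T) := fun H => forall x y, H x -> H y -> R x y.
have chainP F : (F `<=` P)%classic -> total_on F subset ->
    P (\bigcup_(X in F) X)%classic.
  move=> FP tot x y [X FX Xx] [Y FY Yy].
  case: (tot X Y FX FY) => [XY|YX].
    exact: (FP Y FY x y (XY _ Xx) Yy).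
  exact: (FP X FX x y Xx (YX _ Yy)).
have [H [PH maxH]] := Zorn_bigcup chainP.
exists H; split=> // x Rxx Rx; apply: NNPP => Hx; apply: (maxH (H `|` [set x])%classic).
  by split=> [y|/(_ x (or_intror erefl))]; [left|].
by move=> y z [Hy|->] [Hz|->]; [apply: PH | apply: (Rx y Hy).2 | apply: (Rx z Hz).1 |].
Qed.

(* A maximal family of points of [forall i, T i] that are pairwise distinct in
   every coordinate exhausts some coordinate [k], which then injects into all others. *)
Lemma card_le_min (I : Type) (T : I -> Type) : inhabited I ->
  exists k, forall j, card_le (T k) (T j).
Proof.
move=> [i0].
have [H [PH maxH]] := maximal_pairwise
  (fun x y : forall i, T i => forall i, x i = y i -> x = y).
have [k Hk] : exists k, forall t : T k, exists x, H x /\ x k = t.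
  apply: NNPP => nk.
  have avoid i : exists t : T i, forall x, H x -> x i <> t.
    apply: NNPP => ni; apply: nk; exists i => t; apply: NNPP => nt; apply: ni.
    by exists t => x Hx xt; apply: nt; exists x.
  pose x0 i := sval (cid (avoid i)).
  have x0H i x : H x -> x i <> x0 i := svalP (cid (avoid i)) x.
  have Hx0 : H x0.
    apply: maxH => [//|y Hy].
    by split=> i => [/esym|] /(x0H i y Hy).
  exact: x0H i0 x0 Hx0 erefl.
exists k => j; exists (fun t => sval (cid (Hk t)) j) => t t' e.
case: (svalP (cid (Hk t))) => H1 <-; case: (svalP (cid (Hk t'))) => H2 <-.
by rewrite (PH _ _ H1 H2 j e).
Qed.

Lemma card_le_total A B : card_le A B \/ card_le B A.
Proof.
have [[] Hk] := @card_le_min bool (fun b => if b then A else B) (inhabits true).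
  by left; exact: (Hk false).
by right; exact: (Hk true).
Qed.

Lemma maximal_disjoint_seqs B : card_le nat B -> exists H : set (nat -> B),
  [/\ forall x y m n, H x -> H y -> x m = y n -> x = y /\ m = n,
      exists x0, H x0 &
      card_le {b | ~ exists x n, H x /\ x n = b} nat].
Proof.
move=> [r0 r0i].
have [H [PH maxH]] := maximal_pairwise
  (fun x y : nat -> B => forall m n, x m = y n -> x = y /\ m = n).
pose covered b := exists x n, H x /\ x n = b.
have rest_finite : ~ card_le nat {b | ~ covered b}.
  move=> [r ri]; pose x0 n := sval (r n).
  have x0nH m x n : H x -> x0 m <> x n.
    by move=> Hx e; apply: (svalP (r m)); exists x, n.
  have Hx0 : H x0.
    apply: maxH => [m n /sval_inj /ri -> //|y Hy].
    by split=> m n e; [case: (x0nH m y n Hy) | case: (x0nH n y m Hy)].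
  exact: x0nH 0%N x0 0%N Hx0 erefl.
exists H; split; first by move=> x y m n Hx Hy; apply: PH.
  apply: NNPP => nH; apply: rest_finite.
  have nc n : ~ covered (r0 n) by move=> [x [m [Hx _]]]; apply: nH; exists x.
  by exists (fun n => exist (fun b => ~ covered b) (r0 n) (nc n)) => m n /(congr1 sval) /r0i.
by case: (card_le_total {b | ~ covered b} nat) => // /rest_finite.
Qed.

Lemma card_le_prod_nat B : card_le nat B -> card_le (B * nat) B.
Proof.
move=> /maximal_disjoint_seqs [H [PH [x0 Hx0] [rho rhoi]]].
pose covered b := exists x n, H x /\ x n = b.
have pos b : covered b -> {p : (nat -> B) * nat | H p.1 /\ p.1 p.2 = b}.
  by move=> cb; apply: cid; case: cb => x [n hx]; exists (x, n).
(* [(b, k)] goes to an even index of the sequence through [b] if [b] is covered,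
   and to an odd index of [x0] otherwise. *)
pose f (p : B * nat) : B :=
  match pselect (covered p.1) with
  | left cb => (sval (pos _ cb)).1 (2 * pickle ((sval (pos _ cb)).2, p.2))
  | right nc => x0 (2 * pickle (rho (exist _ p.1 nc), p.2)).+1
  end.
exists f => [[b k] [b' k']]; rewrite /f /=.
case: (pselect (covered b)) => [cb|nb]; case: (pselect (covered b')) => [cb'|nb'].
- case: (pos b cb) => [[x n] /= [Hx <-]]; case: (pos b' cb') => [[x' n'] /= [Hx' <-]] /= e.
  have [-> /eqP] := PH _ _ _ _ Hx Hx' e.
  by rewrite eqn_mul2l /= => /eqP /(pcan_inj pickleK) [-> ->].
- case: (pos b cb) => [[x n] /= [Hx _]] /= e.
  have [_] := PH _ _ _ _ Hx Hx0 e; lia.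
- case: (pos b' cb') => [[x n] /= [Hx _]] /= e.
  have [_] := PH _ _ _ _ Hx0 Hx e; lia.
- move=> e; have [_ /eqP] := PH _ _ _ _ Hx0 Hx0 e.
  by rewrite eqSS eqn_mul2l /= => /eqP /(pcan_inj pickleK) [/rhoi /(congr1 sval) /= -> ->].
Qed.

Lemma card_le_prod_natl A B : card_le A B -> card_le (A * nat) (B * nat).
Proof.
by move=> [f fi]; exists (fun p => (f p.1, p.2)) => [[a n] [a' n']] /= [/fi -> ->].
Qed.

Lemma card_le_sum A B C : card_le nat C -> card_le A C -> card_le B C ->
  card_le (A + B) C.
Proof.
move=> hC [f fi] [g gi]; apply: card_le_trans (card_le_prod_nat hC).
exists (fun s => match s with inl a => (f a, 0%N) | inr b => (g b, 1%N) end).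
by move=> [a|a] [a'|a'] //= [] => [/fi ->|/gi ->].
Qed.

Section Supports.
Variable Sigma : eqType.

Definition fin_pred (P : Sigma -> Prop) := exists s : seq Sigma, forall x, P x -> x \in s.

Lemma fin_pred_union (P Q R : Sigma -> Prop) : (forall x, P x -> Q x \/ R x) ->
  fin_pred Q -> fin_pred R -> fin_pred P.
Proof.
move=> PQR [sq hq] [sr hr]; exists (sq ++ sr) => x /PQR.
by rewrite mem_cat => -[/hq|/hr] ->; rewrite ?orbT.
Qed.

Lemma infinite_sigP (P : Sigma -> Prop) : card_le nat {x | P x} <-> ~ fin_pred P.
Proof.
split=> [[f fi] [s hs]|nf].
  pose t := map (fun n => sval (f n)) (iota 0 (size s).+1).
  have ut : uniq t.
    by rewrite map_inj_in_uniq ?iota_uniq // => m n _ _ /sval_inj /fi.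
  have st : {subset t <= s} by move=> y /mapP [n _ ->]; apply: hs; exact: svalP.
  by have := uniq_leq_size ut st; rewrite size_map size_iota ltnn.
have fresh (s : seq Sigma) : exists x, P x /\ x \notin s.
  apply: NNPP => h; apply: nf; exists s => x Px; apply: contraT => xs.
  by case: h; exists x.
pose next s := sval (cid (fresh s)).
pose g := fix g n : seq Sigma := if n is m.+1 then rcons (g m) (next (g m)) else [::].
have nextP n : P (next (g n)) /\ next (g n) \notin g n := svalP (cid (fresh (g n))).
have next_in m n : (m < n)%N -> next (g m) \in g n.
  elim: n => // n IH; rewrite ltnS leq_eqVlt => /orP [/eqP ->|lt] /=;
  by rewrite mem_rcons in_cons ?eqxx // IH ?orbT.
exists (fun n => exist P (next (g n)) (nextP n).1) => m n /(congr1 sval) /= e.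
case: (ltngtP m n) => // lt.
  by have := (nextP n).2; rewrite -e next_in.
by have := (nextP m).2; rewrite e next_in.
Qed.

Lemma card_le_split (P Q R : Sigma -> Prop) : (forall x, P x -> Q x \/ R x) ->
  card_le {x | P x} ({x | Q x} + {x | R x}).
Proof.
move=> PQR.
pose pr (s : {x | Q x} + {x | R x}) := match s with inl a => sval a | inr b => sval b end.
have c (x : {x | P x}) : {s | pr s = sval x}.
  apply: cid; case: (PQR _ (svalP x)) => [q|r].
    by exists (inl (exist _ _ q)).
  by exists (inr (exist _ _ r)).
exists (fun x => sval (c x)) => x y e; apply: sval_inj.
by rewrite -(svalP (c x)) -(svalP (c y)) e.
Qed.

Lemma card_le_union B (P Q R : Sigma -> Prop) : (forall x, P x -> Q x \/ R x) ->
  card_le nat B -> card_le {x | Q x} B -> card_le {x | R x} B -> card_le {x | P x} B.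
Proof.
by move=> PQR hB hQ hR; apply: card_le_trans (card_le_split PQR) (card_le_sum hB hQ hR).
Qed.

End Supports.

Import GRing.Theory.
Local Open Scope ring_scope.

Section Modules.
Variables (K : fieldType) (Sigma : eqType).
Local Notation rowvec := (rowvec K Sigma).
Local Notation subsp := (subsp K Sigma).
Local Notation zero := (zero_sub K Sigma).

Definition supp (v : rowvec) := {i : Sigma | v i != 0}.

Definition restrict (D : Sigma -> Prop) (v : rowvec) : rowvec :=
  fun j => if `[< D j >] then v j else 0.

Lemma subeqE (P Q : subsp) : sub_eq P Q -> P = Q.
Proof. by move=> h; apply: funext => v; apply: propext; exact: h. Qed.

Lemma sub_leNP (P Q : subsp) : ~ sub_le P Q -> exists v, P v /\ ~ Q v.
Proof.
move=> nPQ; apply: NNPP => nex; apply: nPQ => v Pv.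
by apply: NNPP => nQv; apply: nex; exists v.
Qed.

Lemma zeroNP (v : rowvec) : ~ zero v -> exists j, v j != 0.
Proof.
move=> nz; apply: NNPP => nex; apply: nz => i; apply/eqP; apply: contraT => vi.
by case: nex; exists i.
Qed.

Lemma VltP B (v : rowvec) : Vlt K Sigma B v <-> ~ card_le B (supp v).
Proof.
split=> h [f fi]; apply: h.
  exists (sval \o f); split=> [x y /sval_inj /fi //|b]; exact: (svalP (f b)).
case: fi => fi fv; exists (fun b => exist (fun i => v i != 0) (f b) (fv b)).
by move=> x y /(congr1 sval) /fi.
Qed.

Lemma VltNP B (v : rowvec) : ~ Vlt K Sigma B v -> card_le B (supp v).
Proof. by move=> nv; apply: NNPP => /VltP. Qed.

Lemma Vlt_mono B B' : card_le B B' -> sub_le (Vlt K Sigma B) (Vlt K Sigma B').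
Proof. by move=> BB' v /VltP h; apply/VltP => h'; apply: h; apply: card_le_trans BB' h'. Qed.

Lemma zero_Vlt B (v : rowvec) : inhabited B -> zero v -> Vlt K Sigma B v.
Proof. by move=> [b] zv; apply/VltP => -[f _]; have := svalP (f b); rewrite zv eqxx. Qed.

Lemma finsupp_Vlt : sub_eq (finsupp K Sigma) (Vlt K Sigma nat).
Proof.
move=> v; have := infinite_sigP (fun i => v i != 0).
by case=> inf fin; split=> [fv|/VltP nv]; [apply/VltP => /inf | apply: NNPP => /fin].
Qed.

Lemma subspaceD (P : subsp) u v : subspace P -> P u -> P v -> P (fun i => u i + v i).
Proof. by move=> [_ h] Pu Pv; have := h 1 u v Pu Pv; under eq_fun do rewrite mul1r. Qed.

Lemma subspace_sum (P : subsp) n (p : 'I_n -> rowvec) : subspace P ->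
  (forall k, P (p k)) -> P (fun i => \sum_(k < n) p k i).
Proof.
move=> sP; elim: n p => [|n IH] p Pp; first by under eq_fun do rewrite big_ord0; case: sP.
under eq_fun do rewrite big_ord_recr /=.
by apply: subspaceD => //; apply: (IH (fun k => p (widen_ord (leqnSn n) k))).
Qed.

Lemma supp_lincomb (a : K) (u v : rowvec) i : a * u i + v i != 0 -> u i != 0 \/ v i != 0.
Proof. by case: (eqVneq (u i) 0) => [->|]; [rewrite mulr0 add0r; right | left]. Qed.

Lemma submod_inter (P Q : subsp) : submod P -> submod Q -> submod (fun v => P v /\ Q v).
Proof.
move=> [[P0 Pl] Pa] [[Q0 Ql] Qa]; split; first split=> //.
  by move=> a u v [??] [??]; split; [apply: Pl|apply: Ql].
by move=> g v w gM [??] a; split; [apply: Pa gM _ a|apply: Qa gM _ a].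
Qed.

Lemma act_supp g (v w : rowvec) : act g v w ->
  forall j, w j != 0 -> exists i, v i != 0 /\ g i j != 0.
Proof.
move=> a j wj; apply: NNPP => nex; move: wj; case: (a j) => s [_ [_ ->]].
rewrite big1_seq ?oppr0 ?eqxx // => i _.
have [->|vi] := eqVneq (v i) 0; first by rewrite mul0r.
have [->|gij] := eqVneq (g i j) 0; first by rewrite mulr0.
by case: nex; exists i.
Qed.

Lemma act_fin_supp g (v w : rowvec) : glM g -> act g v w ->
  fin_pred (fun i => v i != 0) -> fin_pred (fun j => w j != 0).
Proof.
move=> [rows _] a [s hs].
have row i := cid (rows i).
exists (flatten (map (fun i => sval (row i)) s)) => j /(act_supp a) [i [vi gij]].
by apply/flatten_mapP; exists i; [exact: hs | exact: (svalP (row i))].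
Qed.

Lemma act_card_le_supp g (v w : rowvec) : glM g -> act g v w ->
  card_le (supp w) (supp v * nat).
Proof.
move=> [rows _] a.
have row i := cid (rows i).
have c (x : supp w) : {i | v i != 0 /\ g i (sval x) != 0}.
  by apply: cid; exact: (act_supp a (svalP x)).
(* [j] is recovered from a source [i] and its position in the finite row [i] of [g] *)
exists (fun x => (exist (fun i => v i != 0) (sval (c x)) (svalP (c x)).1,
                  index (sval x) (sval (row (sval (c x)))))).
move=> x y [e1 e2]; apply: sval_inj.
have hx := svalP (row _) _ (svalP (c x)).2; have hy := svalP (row _) _ (svalP (c y)).2.
by rewrite -(nth_index (sval x) hx) e2 e1 nth_index.
Qed.

Lemma restrict_act (D : Sigma -> Prop) (v : rowvec) :
  exists g, glM g /\ act g v (restrict D v).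
Proof.
pose g i j : K := if (i == j) && `[< D j >] then -1 else 0.
have g0 i j : g i j != 0 -> i = j by rewrite /g; case: (i =P j) => //= _; rewrite eqxx.
exists g; split.
  by split=> i; exists [:: i] => j /g0 ->; rewrite inE.
move=> j; exists [:: j]; split=> //; split=> [i /g0 ->|]; first by rewrite inE.
rewrite big_seq1 /g /restrict eqxx /=.
by case: asboolP => _; rewrite ?mulrN1 ?opprK ?mulr0 ?oppr0.
Qed.

(* The matrix has the single entry [- u j / w (sigma j)] in column [j], at row
   [sigma j]; finite fibres of [sigma] make its rows finite. *)
Lemma act_transport (w u : rowvec) (sigma : Sigma -> Sigma) :
  (forall j, u j != 0 -> w (sigma j) != 0) ->
  (forall i, exists s : seq Sigma, forall j, u j != 0 -> sigma j = i -> j \in s) ->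
  exists g, glM g /\ act g w u.
Proof.
move=> hw fibres.
pose g i j : K := if (u j != 0) && (sigma j == i) then - u j / w i else 0.
have g0 i j : g i j != 0 -> u j != 0 /\ sigma j = i.
  by rewrite /g; case: (u j != 0); case: (sigma j =P i); rewrite ?eqxx.
exists g; split; first split.
- by move=> i; have [s hs] := fibres i; exists s => j /g0 [uj /hs]; apply.
- by move=> j; exists [:: sigma j] => i /g0 [_ ->]; rewrite inE.
move=> j; exists [:: sigma j]; split=> //; split=> [i /g0 [_ ->]|]; first by rewrite inE.
rewrite big_seq1 /g eqxx andbT; have [uj|/negPn/eqP ->] := boolP (u j != 0).
  by rewrite mulNr mulrN opprK mulrCA mulfV ?mulr1 // hw.
by rewrite mulr0 oppr0.
Qed.

Lemma act_of_card_le_supp (w u : rowvec) : card_le (supp u) (supp w) ->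
  exists g, glM g /\ act g w u.
Proof.
move=> [f fi].
pose sigma j := if pselect (u j != 0) is left uj then sval (f (exist _ j uj)) else j.
have sigmaE j (uj : u j != 0) : sigma j = sval (f (exist _ j uj)).
  by rewrite /sigma; case: pselect => [uj'|[]] //; rewrite (Prop_irrelevance uj' uj).
apply: (act_transport (sigma := sigma)) => [j uj|i].
  by rewrite (sigmaE j uj); exact: (svalP (f _)).
have [[j0 [uj0 <-]]|none] := classic (exists j, u j != 0 /\ sigma j = i).
  exists [:: j0] => j uj; rewrite inE (sigmaE j uj) (sigmaE j0 uj0).
  by move=> /sval_inj /fi /(congr1 sval) /= ->.
by exists [::] => j uj ji; case: none; exists j.
Qed.

Lemma act_of_fin_supp (w u : rowvec) j0 : fin_pred (fun j => u j != 0) -> w j0 != 0 ->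
  exists g, glM g /\ act g w u.
Proof.
move=> [s hs] wj0; apply: (act_transport (sigma := fun=> j0)) => // i.
by exists s => j /hs.
Qed.

Lemma supp_restrict_range B (e : B -> Sigma) (v : rowvec) : injective e ->
  (forall b, v (e b) != 0) ->
  let u := restrict (fun i => exists b, e b = i) v in
  card_le (supp u) B /\ card_le B (supp u).
Proof.
move=> ei ve u.
have ue b : u (e b) = v (e b) by rewrite /u /restrict; case: asboolP => // -[]; exists b.
have preim (x : supp u) : {b | e b = sval x}.
  apply: cid; move: (svalP x); rewrite /u /restrict.
  by case: asboolP => // _; rewrite eqxx.
split.
  exists (fun x => sval (preim x)) => x y exy; apply: sval_inj.
  by rewrite -(svalP (preim x)) -(svalP (preim y)) exy.
have ue0 b : u (e b) != 0 by rewrite ue.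
by exists (fun b => exist _ (e b) (ue0 b)) => b c /(congr1 sval) /ei.
Qed.

Lemma submod_finsupp : submod (finsupp K Sigma).
Proof.
split; first split.
- by exists [::] => i; rewrite eqxx.
- by move=> a u v fu fv; apply: fin_pred_union (@supp_lincomb a u v) fu fv.
- by move=> g v w gM fv a; apply: act_fin_supp gM a fv.
Qed.

Lemma submod_Vle B : card_le nat B -> submod (Vle K Sigma B).
Proof.
move=> hB; split; first split.
- have [b] := card_le_inhabited hB.
  by exists (fun _ => b) => -[x]; rewrite eqxx.
- by move=> a u v hu hv; apply: card_le_union (@supp_lincomb a u v) hB hu hv.
- move=> g v w gM hv a; apply: card_le_trans (act_card_le_supp gM a) _.
  exact: card_le_trans (card_le_prod_natl hv) (card_le_prod_nat hB).
Qed.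

Lemma simple_overP (U P : subsp) : submod P -> sub_le U P -> ~ sub_le P U ->
  (forall w u, P w -> ~ U w -> P u -> exists g, glM g /\ act g w u) ->
  simple_over U P.
Proof.
move=> sP UP nPU reach; split=> // Q [_ Qact] UQ QP.
have [QU|/sub_leNP [w [Qw nUw]]] := classic (sub_le Q U); [by left | right].
by move=> u Pu; have [g [gM a]] := reach w u (QP _ Qw) nUw Pu; apply: Qact gM Qw a.
Qed.

(* Each [v] outside [U] can be pushed into [V \ U]; so a simple [P/U] meets [V]
   outside [U], and then lies in [V] by simplicity. *)
Lemma simple_over_sub (U V P : subsp) : submod V -> sub_le U V ->
  (forall v, ~ U v -> exists g w, [/\ glM g, act g v w, V w & ~ U w]) ->
  simple_over U P -> sub_le P V.
Proof.
move=> sV UV push [sP UP nPU minP].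
have [PVU|PPV] := minP _ (submod_inter sP sV) (fun x Ux => conj (UP _ Ux) (UV _ Ux))
  (fun x => @proj1 _ _); last by move=> v /PPV [].
case: nPU => v Pv; apply: NNPP => nUv; have [g [w [gM a Vw nUw]]] := push v nUv.
by apply/nUw/PVU; split=> //; case: sP => _ Pact; apply: Pact gM Pv a.
Qed.

(* By [simple_over_sub] every simple [Q/U] lies in [P]. *)
Lemma socle_overE (U P : subsp) : U (fun _ => 0) -> simple_over U P ->
  (forall v, ~ U v -> exists g w, [/\ glM g, act g v w, P w & ~ U w]) ->
  sub_eq (socle_over U) P.
Proof.
move=> U0 sP push v; split=> [[n [p [simple_p Udiff]]]|Pv]; last first.
  exists 1%N, (fun _ => v); split=> [k|]; first by exists P.
  suff -> : (fun i => v i - \sum_(k < 1) (fun _ : 'I_1 => v) k i) = (fun _ => 0) by [].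
  by apply: funext => i; rewrite big_ord1 subrr.
have [[subP _] UP _ _] := sP.
have Psum : P (fun i => \sum_(k < n) p k i).
  apply: subspace_sum => // k; have [Q [sQ Qp]] := simple_p k.
  by apply: simple_over_sub sQ _ Qp; first by case: sP.
have -> : v = fun i => (v i - \sum_(k < n) p k i) + \sum_(k < n) p k i.
  by apply: funext => i; rewrite subrK.
exact: subspaceD (UP _ Udiff) Psum.
Qed.

Lemma simple_finsupp (i0 : Sigma) : simple_over zero (finsupp K Sigma).
Proof.
have zero_fin v : zero v -> finsupp K Sigma v by move=> zv; exists [::] => i; rewrite zv eqxx.
apply: simple_overP => //; first exact: submod_finsupp.
  pose delta := restrict (fun i => i = i0) (fun _ => 1).
  have delta0 : delta i0 != 0.
    by rewrite /delta /restrict; case: asboolP => // _; rewrite oner_eq0.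
  move=> /(_ delta) zdelta; move: delta0; rewrite zdelta ?eqxx //.
  exists [:: i0] => i; rewrite /delta /restrict inE.
  by case: asboolP => [->|_]; rewrite ?eqxx.
move=> w u _ /zeroNP [j0 wj0] fu; exact: act_of_fin_supp fu wj0.
Qed.

Lemma simple_Vle B (e : B -> Sigma) : injective e -> card_le nat B ->
  simple_over (Vlt K Sigma B) (Vle K Sigma B).
Proof.
move=> ei hB; apply: simple_overP.
- exact: submod_Vle.
- by move=> v /VltP vB; case: (card_le_total (supp v) B) => // /vB.
- pose chi := restrict (fun i => exists b, e b = i) (fun _ : Sigma => 1 : K).
  have [chiB Bchi] := @supp_restrict_range B e (fun _ => 1) ei (fun _ => oner_neq0 _).
  by move=> /(_ chi chiB) /VltP.
move=> w u _ /VltNP Bw uB; apply: act_of_card_le_supp; exact: card_le_trans uB Bw.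
Qed.

Lemma socle_zero (i0 : Sigma) : sub_eq (socle_over zero) (finsupp K Sigma).
Proof.
apply: (socle_overE _ (simple_finsupp i0)) => // v /zeroNP [j0 vj0].
have [g [gM a]] := restrict_act (fun j => j = j0) v.
exists g, (restrict (fun j => j = j0) v); split=> //.
  exists [:: j0] => i; rewrite /restrict inE.
  by case: asboolP => [->|_]; rewrite ?eqxx.
by move=> /(_ j0); rewrite /restrict; case: asboolP => // _ /eqP; rewrite (negbTE vj0).
Qed.

Lemma socle_Vlt B (e : B -> Sigma) : injective e -> card_le nat B ->
  sub_eq (socle_over (Vlt K Sigma B)) (Vle K Sigma B).
Proof.
move=> ei hB; apply: (socle_overE _ (simple_Vle ei hB)) => [|v /VltNP [f fi]].
  by apply: zero_Vlt (card_le_inhabited hB) _.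
pose D i := exists b, sval (f b) = i.
have [g [gM a]] := restrict_act D v.
have [uB Bu] := @supp_restrict_range B (sval \o f) v
  (fun b c bc => fi _ _ (sval_inj bc)) (fun b => svalP (f b)).
by exists g, (restrict D v); split=> // /VltP.
Qed.
End Modules.

Section Filtration.
Variables (K : fieldType) (Sigma : eqType).
Hypothesis Sigma_infinite : card_le nat Sigma.
Local Notation subsp := (subsp K Sigma).
Local Notation zero := (zero_sub K Sigma).
Local Notation full := (full_sub K Sigma).
Local Notation Vlt := (Vlt K Sigma).
Local Notation Vle := (Vle K Sigma).

Definition filtration_term (W : subsp) := sub_eq W zero \/ sub_eq W full \/
  exists B : Type, card_le nat B /\ card_le B Sigma /\ sub_eq W (Vlt B).

Lemma socle_full : sub_eq (socle_over full) full.
Proof. by move=> v; split=> // _; exists 0%N, (fun _ _ => 0); split=> // -[]. Qed.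

(* [Y] is a support of least cardinality among those of cardinality > |B|. *)
Lemma Vle_as_Vlt B : card_le nat B -> ~ sub_le full (Vle B) ->
  exists Y : Sigma -> Prop, card_le nat {x | Y x} /\ sub_eq (Vle B) (Vlt {x | Y x}).
Proof.
move=> hB /sub_leNP [v [_ nv]].
have [[Y YB] minY] := @card_le_min {Y : Sigma -> Prop | ~ card_le {x | Y x} B}
  (fun Y => {x | sval Y x}) (inhabits (exist _ (fun i => v i != 0 : Prop) nv)).
rewrite /= in YB minY; exists Y; split.
  case: (card_le_total nat {x | Y x}) => // Ynat.
  by case: YB; apply: card_le_trans Ynat hB.
move=> u; split=> [uB|/VltP uY].
  by apply/VltP => Yu; case: YB; apply: card_le_trans Yu uB.
by apply: NNPP => uB; apply: uY; exact: (minY (exist _ (fun i => u i != 0 : Prop) uB)).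
Qed.

(* The least cardinal of a subset of Sigma bounding a family of cardinals
   computes the union of the corresponding V^*_beta. *)
Lemma Vlt_sup (Bs : Type -> Prop) : (forall B, Bs B -> card_le B Sigma) ->
  exists Y : Sigma -> Prop, (forall B, Bs B -> card_le B {x | Y x}) /\
    forall v, Vlt {x | Y x} v -> exists B, Bs B /\ Vlt B v.
Proof.
move=> BsSigma.
have Sigma_ub B : Bs B -> card_le B {x : Sigma | True}.
  by move=> /BsSigma [f fi]; exists (fun b => exist _ (f b) I) => b c /(congr1 sval) /fi.
have [[Y Yub] minY] := @card_le_min
  {Y : Sigma -> Prop | forall B, Bs B -> card_le B {x | Y x}}
  (fun Y => {x | sval Y x}) (inhabits (exist _ (fun _ => True) Sigma_ub)).
rewrite /= in Yub minY; exists Y; split=> // v /VltP vY; apply: NNPP => nex; apply: vY.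
apply: (minY (exist _ (fun i => v i != 0 : Prop) _)) => B BsB.
by apply: VltNP => vB; apply: nex; exists B.
Qed.

Lemma socle_term W : filtration_term W -> filtration_term (socle_over W).
Proof.
have [i0] := card_le_inhabited Sigma_infinite.
case=> [/subeqE ->|[/subeqE ->|[B [hB [[e ei] /subeqE ->]]]]].
- right; right; exists nat; split; first exact: card_le_refl.
  by split=> // v; rewrite (socle_zero i0 v) finsupp_Vlt.
- by right; left; exact: socle_full.
rewrite (subeqE (socle_Vlt ei hB)).
have [Vle_full|/(Vle_as_Vlt hB) [Y [hY VleY]]] := classic (sub_le full (Vle B)).
  by right; left => v; split=> // _; exact: Vle_full.
by right; right; exists {x | Y x}; split=> //; split=> //; exact: card_le_sig.
Qed.

Lemma union_term (F : subsp -> Prop) : (forall W, F W -> filtration_term W) ->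
  filtration_term (fun v => zero v \/ exists W, F W /\ W v).
Proof.
move=> Fterm.
have [[W [FW Wfull]]|nfull] := classic (exists W, F W /\ sub_eq W full).
  by right; left => v; split=> // _; right; exists W; split=> //; apply/Wfull.
pose Bs B := exists W, F W /\ card_le nat B /\ card_le B Sigma /\ sub_eq W (Vlt B).
have Fcases W : F W -> sub_eq W zero \/ exists B, Bs B /\ sub_eq W (Vlt B).
  move=> FW; case: (Fterm W FW) => [|[Wfull|[B [hB [BS WB]]]]]; first by left.
    by case: nfull; exists W.
  by right; exists B; split=> //; exists W.
have [[? BsB0]|none] := classic (exists B, Bs B); last first.
  left => v; split=> [[//|[W [FW Wv]]]|]; last by left.
  case: (Fcases W FW) => [Wzero|[B [BsB _]]]; first exact: (Wzero v).1 Wv.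
  by case: none; exists B.
have Bs_Sigma B : Bs B -> card_le B Sigma by move=> [W [_ [_ []]]].
have [Y [Yub Ysup]] := Vlt_sup Bs_Sigma.
have hY : card_le nat {x | Y x}.
  by have [_ [_ [hB0 _]]] := BsB0; apply: card_le_trans hB0 (Yub _ BsB0).
right; right; exists {x | Y x}; split=> //; split; first exact: card_le_sig.
move=> v; split=> [[zv|[W [FW Wv]]]|/Ysup [B [[W [FW [_ [_ WB]]]] vB]]].
- exact: zero_Vlt (card_le_inhabited hY) zv.
- case: (Fcases W FW) => [Wzero|[B [BsB WB]]].
    exact: zero_Vlt (card_le_inhabited hY) ((Wzero v).1 Wv).
  by apply: Vlt_mono (Yub B BsB) _ _; apply/WB.
- by right; exists W; split=> //; apply/WB.
Qed.

Lemma layer_term W : SocLayer W -> filtration_term W.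
Proof. by elim=> [F _ IH|W' _ IH]; [exact: union_term | exact: socle_term]. Qed.

Lemma layer_zero : exists W, SocLayer W /\ sub_eq W zero.
Proof.
exists (fun v => zero v \/ exists W, False /\ W v); split; first by apply: SL_union => W [].
by move=> v; split=> [[//|[W [] //]]|zv]; left.
Qed.

(* V^*_beta is the union of the socle layers it contains: that union is a layer,
   and were it smaller than V^*_beta, so would be the next layer. *)
Lemma layer_Vlt B : card_le nat B -> card_le B Sigma ->
  exists W, SocLayer W /\ sub_eq W (Vlt B).
Proof.
move=> hB [e ei]; have [i0] := card_le_inhabited Sigma_infinite.
pose U v := zero v \/ exists W, (SocLayer W /\ sub_le W (Vlt B)) /\ W v.
have LU : SocLayer U by apply: SL_union => W [].
have UB : sub_le U (Vlt B).
  by move=> v [zv|[W [[_ WB] Wv]]]; [exact: zero_Vlt (card_le_inhabited hB) zv | exact: WB].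
have socle_in_U : sub_le (socle_over U) (Vlt B) -> sub_le (socle_over U) U.
  by move=> sB v Sv; right; exists (socle_over U); do 2!split=> //; exact: SL_succ.
exists U; split=> // v; split=> [|vB]; first exact: UB.
case: (layer_term LU) => [|[|[B' [hB' [[e' ei'] ]]]]] /subeqE EU;
  rewrite EU in UB socle_in_U *.
- have fin_in_B : sub_le (socle_over zero) (Vlt B).
    by move=> w /(socle_zero i0 w) /finsupp_Vlt; exact: Vlt_mono hB w.
  case: (simple_finsupp K i0) => _ _ [] w.
  by move=> /(socle_zero i0 w) /(socle_in_U fin_in_B).
- by case: (simple_Vle K ei hB) => _ _ [] x _; apply: UB.
rewrite (subeqE (socle_Vlt ei' hB')) in socle_in_U.
have [Vle'B|/sub_leNP [x [x_le /VltNP Bx]]] := classic (sub_le (Vle B') (Vlt B)).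
  by case: (simple_Vle K ei' hB') => _ _ []; apply: socle_in_U.
by apply: Vlt_mono vB; apply: card_le_trans Bx x_le.
Qed.

Lemma layer_full : exists W, SocLayer W /\ sub_eq W full.
Proof.
have [W [LW WSigma]] := layer_Vlt Sigma_infinite (card_le_refl Sigma).
exists (socle_over W); split; first exact: SL_succ.
rewrite (subeqE WSigma) => v; rewrite (socle_Vlt (@inj_id Sigma) Sigma_infinite v).
by split=> // _; exact: card_le_sig.
Qed.
End Filtration.

Theorem mainTheorem8 (K : closedFieldType) (Sigma : eqType)
  (charK0 : [pchar K] =i pred0)
  (Sigma_infinite : exists f : nat -> Sigma, injective f) :
  (* soc V^* = V_* = V^*_{aleph_0} *)
  sub_eq (socle_over (zero_sub K Sigma)) (finsupp K Sigma) /\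
  sub_eq (finsupp K Sigma) (Vlt K Sigma nat) /\
  (* for every infinite cardinal beta = |B| <= alpha = |Sigma| *)
  (forall B : Type, (exists f : nat -> B, injective f) ->
     (exists f : B -> Sigma, injective f) ->
     sub_eq (socle_over (Vlt K Sigma B)) (Vle K Sigma B) /\
     simple_over (Vlt K Sigma B) (Vle K Sigma B)) /\
  (* the transfinite socle filtration of V^* consists exactly of
     0 and the V^*_beta, beta infinite, beta <= alpha^+ (V^*_{alpha^+} = V^* ) *)
  (forall W, SocLayer W ->
     sub_eq W (zero_sub K Sigma) \/ sub_eq W (full_sub K Sigma) \/
     exists B : Type, (exists f : nat -> B, injective f) /\
       (exists f : B -> Sigma, injective f) /\ sub_eq W (Vlt K Sigma B)) /\
  (exists W, SocLayer W /\ sub_eq W (zero_sub K Sigma)) /\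
  (exists W, SocLayer W /\ sub_eq W (full_sub K Sigma)) /\
  (forall B : Type, (exists f : nat -> B, injective f) ->
     (exists f : B -> Sigma, injective f) ->
     exists W, SocLayer W /\ sub_eq W (Vlt K Sigma B)).
Proof.
have [i0] := card_le_inhabited Sigma_infinite.
split; first exact: socle_zero i0.
split; first exact: finsupp_Vlt.
split; first by move=> B hB [e ei]; split; [exact: socle_Vlt ei hB | exact: simple_Vle ei hB].
split; first exact: layer_term Sigma_infinite.
split; first exact: layer_zero.
split; first exact: layer_full.
exact: layer_Vlt.
Qed.
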